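(* Let $G$ be a connected graph with $\mathrm{col}(G)\geq 3$. Then for every integer $m\geq \mathrm{col}(G)+3$, $$P_{DP}(K_1\vee G,m)\geq \min\left\{P(K_1\vee G,m),\; m\,P_{DP}(G,m-1)+2\,(m-\mathrm{col}(G)-2)^{|V(G)|-2}\right\}.$$
   Context: All graphs are finite and simple. $K_1\vee G$ is the join of a single vertex with $G$. The coloring number $\mathrm{col}(G)$ is the smallest integer $d$ such that there is an ordering $v_1,\dots,v_n$ of $V(G)$ in which each $v_i$ has at most $d-1$ neighbors among $v_1,\dots,v_{i-1}$. $P(G,m)$ denotes the chromatic polynomial of $G$. A cover of a graph $G$ is a pair $\mathcal{H}=(L,H)$ where $H$ is a graph and $L:V(G)\to\mathcal{P}(V(H))$ satisfies: (1) the sets $L(u)$, $u\in V(G)$, partition $V(H)$; (2) for every $u$, $H[L(u)]$ is complete; (3) if $E_H(L(u),L(v))\neq\emptyset$ then $u=v$ or $uv\in E(G)$; (4) if $uv\in E(G)$ then $E_H(L(u),L(v))$ is a matching (possibly empty). Here $E_H(S,U)$ is the set of edges of $H$ between $S$ and $U$. The cover is $m$-fold if $|L(u)|=m$ for all $u$. An $\mathcal{H}$-coloring is an independent set of $H$ of size $|V(G)|$. $P_{DP}(G,\mathcal{H})$ is the number of $\mathcal{H}$-colorings, and $P_{DP}(G,m)$ is the minimum of $P_{DP}(G,\mathcal{H})$ over all $m$-fold covers $\mathcal{H}$ of $G$. *)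

From mathcomp Require Import all_boot.
Set Implicit Arguments. Unset Strict Implicit. Unset Printing Implicit Defensive.

Definition simple_graph (V : finType) (e : rel V) : Prop :=
  symmetric e /\ irreflexive e.

Definition connected_graph (V : finType) (e : rel V) : Prop :=
  forall x y : V, connect e x y.

(* K_1 \/ G : the new vertex is None, adjacent to every vertex of G. *)
Definition join_K1 (V : finType) (e : rel V) : rel (option V) :=
  fun x y => match x, y with
             | Some a, Some b => e a b
             | None, Some _ | Some _, None => true
             | None, None => false
             end.

Definition col_ordering_ok (V : finType) (e : rel V) (d : nat) : Prop :=
  exists s : seq V, perm_eq s (enum V) /\
    forall x, x \in s -> count (e x) (take (index x s) s) < d.

Definition is_coloring_number (V : finType) (e : rel V) (c : nat) : Prop :=
  col_ordering_ok e c /\ (forall d, col_ordering_ok e d -> c <= d).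

Definition chrom_poly (V : finType) (e : rel V) (m : nat) : nat :=
  #|[set f : {ffun V -> 'I_m} | [forall x, forall y, e x y ==> (f x != f y)]]|.

(* m-fold DP cover: H is a simple graph on V * 'I_m, with L(u) = {u} x 'I_m *)
Definition is_DP_cover (V : finType) (e : rel V) (m : nat)
    (h : rel (V * 'I_m)) : Prop :=
  [/\ symmetric h, irreflexive h,
      (forall u (i j : 'I_m), i != j -> h (u, i) (u, j)),
      (forall u v (i j : 'I_m), u != v -> h (u, i) (v, j) -> e u v) &
      (forall u v (i : 'I_m), e u v -> #|[set j : 'I_m | h (u, i) (v, j)]| <= 1)].

Definition independent (T : finType) (h : rel T) (I : {set T}) : bool :=
  [forall x in I, forall y in I, ~~ h x y].

Definition DP_count (V : finType) (m : nat) (h : rel (V * 'I_m)) : nat :=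
  #|[set I : {set V * 'I_m} | independent h I && (#|I| == #|V|)]|.

Definition is_DP_poly (V : finType) (e : rel V) (m : nat) (p : nat) : Prop :=
  (exists h : rel (V * 'I_m), is_DP_cover e h /\ DP_count h = p) /\
  (forall h : rel (V * 'I_m), is_DP_cover e h -> p <= DP_count h).

From mathcomp Require Import all_boot zify.
Set Implicit Arguments. Unset Strict Implicit. Unset Printing Implicit Defensive.

(* Split the colorings of an m-fold cover H of K_1 \/ G according to the color i
   of the apex.  Deleting from every list L(u) the color matched to (apex, i)
   leaves an (m-1)-fold cover of G whose colorings all lie in class i, so every
   class has at least P_DP(G, m-1) members.  Two defects give more.  If some
   apex color is unmatched in a list L(u), then u may also take the freed color,
   which by a greedy count along an ordering witnessing col(G) adds
   (m - col(G) - 1)^(n-1) >= 2 (m - col(G) - 2)^(n-2) colorings.  If a reduced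
   cover has a non-perfect matching along an edge uv, adding a missing edge
   still gives a cover of G, with at least P_DP(G, m-1) colorings, and the
   colorings using both ends of that edge are counted greedily apart: this
   adds (m - col(G) - 2)^(n-2), which is enough when it happens for two apex
   colors.  In the remaining case, with at
   most one imperfect reduced cover, the apex matchings place an edge of H
   between the matched colors of u and v for every edge uv of G, so every
   proper m-coloring of K_1 \/ G transports to an H-coloring. *)

Definition dp_coloring (W : finType) k (h : rel (W * 'I_k)) (f : {ffun W -> 'I_k}) :=
  [forall x, forall y, ~~ h (x, f x) (y, f y)].

Section DPColorings.
Variables (W : finType) (k : nat) (h : rel (W * 'I_k)).
Hypothesis h_clique : forall u (i j : 'I_k), i != j -> h (u, i) (u, j).

Definition ffun_graph (f : {ffun W -> 'I_k}) : {set W * 'I_k} := [set (x, f x) | x in W].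

Lemma ffun_graph_inj : injective ffun_graph.
Proof.
move=> f1 f2 eqF; apply/ffunP=> x.
have : (x, f1 x) \in ffun_graph f2 by rewrite -eqF imset_f.
by case/imsetP=> y _ [-> ->].
Qed.

Lemma card_ffun_graph f : #|ffun_graph f| = #|W|.
Proof. by rewrite card_imset // => x y []. Qed.

Lemma independent_ffun_graph I :
  independent h I -> #|I| = #|W| -> exists f, I = ffun_graph f.
Proof.
move=> /forall_inP indI cardI.
have fst_inj : {in I &, injective (@fst W 'I_k)}.
  case=> x i [y j] Hi Hj /= exy; subst y; apply/eqP; rewrite xpair_eqE eqxx /=.
  apply: contraT => ij; move/forall_inP: (indI _ Hi) => /(_ _ Hj).
  by rewrite h_clique.
have fst_onto : (@fst W 'I_k) @: I = setT.
  by apply/eqP; rewrite eqEcard subsetT cardsT (card_in_imset fst_inj) cardI leqnn.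
have color x : exists i, (x, i) \in I.
  have : x \in (@fst W 'I_k) @: I by rewrite fst_onto inE.
  by case/imsetP=> -[y i] Hyi /= ->; exists i.
have [f fI] := fin_all_exists color.
exists [ffun x => f x]; apply/esym/eqP; rewrite eqEcard card_ffun_graph cardI leqnn andbT.
by apply/subsetP=> _ /imsetP[x _ ->]; rewrite ffunE.
Qed.

Lemma DP_countE : DP_count h = #|[set f | dp_coloring h f]|.
Proof.
rewrite /DP_count -(card_imset _ ffun_graph_inj); apply: eq_card => I.
rewrite !inE; apply/idP/imsetP.
- case/andP=> indI /eqP cardI; have [f defI] := independent_ffun_graph indI cardI.
  have fI x : (x, f x) \in I by rewrite defI imset_f.
  exists f => //; rewrite inE; apply/forallP=> x; apply/forallP=> y.
  by move/forall_inP: indI => /(_ _ (fI x))/forall_inP; apply.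
- case=> f; rewrite inE => /forallP col ->; rewrite card_ffun_graph eqxx andbT.
  apply/forall_inP=> _ /imsetP[x _ ->]; apply/forall_inP=> _ /imsetP[y _ ->].
  exact: (forallP (col x)).
Qed.

End DPColorings.

Lemma leq_card_setU (T : finType) (A B : {set T}) : #|A :|: B| <= #|A| + #|B|.
Proof. by rewrite cardsU leq_subr. Qed.

Lemma take_index_filter (T : eqType) (p : pred T) (s : seq T) x : p x ->
  take (index x (filter p s)) (filter p s) = filter p (take (index x s) s).
Proof.
move=> px; elim: s => [|y s IHs] //=.
have [->|yx] := eqVneq y x; first by rewrite px /= eqxx.
by case: ifP => py /=; rewrite ?(negPf yx) /= ?py IHs.
Qed.

Lemma size_filter_notin (T : eqType) (s K : seq T) :
  uniq s -> uniq K -> {subset K <= s} ->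
  size [seq x <- s | x \notin K] = size s - size K.
Proof.
move=> s_uniq K_uniq Ks.
have perm_K : perm_eq [seq x <- s | x \in K] K.
  apply: uniq_perm (filter_uniq _ s_uniq) K_uniq _ => x.
  by rewrite mem_filter andb_idr //; apply: Ks.
by rewrite -(perm_size perm_K) !size_filter -(count_predC (mem K) s) addKn.
Qed.

Section DPCover.
Variables (W : finType) (e : rel W) (k : nat) (h : rel (W * 'I_k)).
Hypotheses (e_sym : symmetric e) (h_cover : is_DP_cover e h).

Lemma DP_cover_matchingr u v a b b' :
  e u v -> h (u, a) (v, b) -> h (u, a) (v, b') -> b = b'.
Proof.
case: h_cover => _ _ _ _ h_match euv hb hb'.
by apply: (card_le1_eqP (h_match u v a euv)); rewrite inE.
Qed.

Lemma DP_cover_matchingl u v a a' b :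
  e u v -> h (u, a) (v, b) -> h (u, a') (v, b) -> a = a'.
Proof.
case: h_cover => h_sym _ _ _ _ euv ha ha'.
have evu : e v u by rewrite e_sym.
by apply: (DP_cover_matchingr (a := b) evu); rewrite h_sym.
Qed.

Lemma DP_cover_conflicts_card x (g : {ffun W -> 'I_k}) (r : seq W) : x \notin r ->
  #|[set a | [exists y in r, h (x, a) (y, g y)]]| <= count (e x) r.
Proof.
case: h_cover => h_sym _ _ h_edge h_match.
elim: r => [|y r IHr] /=.
  by move=> _; rewrite leqn0 cards_eq0; apply/eqP/setP=> a; rewrite !inE; apply/existsP=> -[].
rewrite in_cons negb_or => /andP[xy xr].
have split_y : [set a | [exists z in y :: r, h (x, a) (z, g z)]] \subset
    [set a | h (x, a) (y, g y)] :|: [set a | [exists z in r, h (x, a) (z, g z)]].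
  apply/subsetP=> a; rewrite !inE => /exists_inP[z]; rewrite in_cons.
  by case/orP=> [/eqP-> ->|zr hz] //; apply/orP; right; apply/exists_inP; exists z.
apply: leq_trans (subset_leq_card split_y) _; apply: leq_trans (leq_card_setU _ _) _.
apply: leq_add (IHr xr); case exy: (e x y) => /=.
  have eyx : e y x by rewrite e_sym.
  by apply: leq_trans (h_match y x (g y) eyx); apply/eq_leq/eq_card => a; rewrite !inE h_sym.
rewrite leqn0 cards_eq0; apply/eqP/setP=> a; rewrite !inE.
by apply/negP=> /(h_edge _ _ _ _ xy); rewrite exy.
Qed.

Section GreedyExtension.
Variables (K : seq W) (g0 : {ffun W -> 'I_k}) (A : W -> {set 'I_k}).
Hypothesis g0_coloring : {in K &, forall x y, ~~ h (x, g0 x) (y, g0 y)}.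

Definition list_extension (s : seq W) (g : {ffun W -> 'I_k}) : bool :=
  [&& [forall x, (x \notin s) ==> (g x == g0 x)],
      [forall x in s, g x \in A x] &
      [forall x in s ++ K, forall y in s ++ K, ~~ h (x, g x) (y, g y)]].

Definition free_colors (r : seq W) (g : {ffun W -> 'I_k}) x :=
  [set a in A x | [forall y in r, ~~ h (x, a) (y, g y)]].

Lemma free_colors_card r g x : x \notin r -> #|A x| - count (e x) r <= #|free_colors r g x|.
Proof.
move=> xr; rewrite leq_subLR addnC.
apply: leq_trans (leq_add (leqnn _) (DP_cover_conflicts_card g xr)).
apply: leq_trans (leq_card_setU _ _); apply/subset_leq_card/subsetP=> a Aa.
rewrite !inE Aa /=; case: (boolP [forall y in r, _]) => //= /forall_inPn[y yr].
by rewrite negbK => hy; apply/exists_inP; exists y.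
Qed.

Definition recolor (g : {ffun W -> 'I_k}) x a := [ffun z => if z == x then a else g z].

Lemma list_extension_rcons s x g a : x \notin s ->
  list_extension s g -> a \in free_colors (s ++ K) g x ->
  list_extension (rcons s x) (recolor g x a).
Proof.
case: h_cover => h_sym h_irr _ _ _ xs /and3P[/forallP g_off /forall_inP g_A /forall_inP g_col].
rewrite inE => /andP[Aa /forall_inP a_free]; apply/and3P; split.
- apply/forallP=> z; apply/implyP; rewrite mem_rcons in_cons negb_or ffunE => /andP[/negPf-> zs].
  exact: (implyP (g_off z)).
- by apply/forall_inP=> z; rewrite mem_rcons in_cons ffunE; case: eqP => [->|_ /= /g_A].
apply/forall_inP=> y ysK; apply/forall_inP=> z; move: ysK.
rewrite -cats1 -catA !mem_cat !mem_seq1 !ffunE.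
case: (eqVneq y x) => [->|yx]; case: (eqVneq z x) => [->|zx] //=; rewrite ?h_irr //.
- by move=> _ zsK; apply: a_free; rewrite mem_cat.
- by move=> ysK _; rewrite h_sym; apply: a_free; rewrite mem_cat.
- by move=> ysK zsK; apply/(forall_inP (g_col y _)); rewrite mem_cat.
Qed.

Lemma list_extension_rcons_card s x t : x \notin s ->
  (forall g, list_extension s g -> t <= #|free_colors (s ++ K) g x|) ->
  t * #|[set g | list_extension s g]| <= #|[set g | list_extension (rcons s x) g]|.
Proof.
move=> xs free_t.
pose P := [set p : {ffun W -> 'I_k} * 'I_k |
            list_extension s p.1 && (p.2 \in free_colors (s ++ K) p.1 x)].
have card_P : t * #|[set g | list_extension s g]| <= #|P|.
  rewrite -[#|P|]sum1_card (eq_bigl (fun p => list_extension s p.1 &&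
      (p.2 \in free_colors (s ++ K) p.1 x))); last by move=> p; rewrite inE.
  rewrite -(pair_big_dep (list_extension s)
    (fun g a => a \in free_colors (s ++ K) g x) (fun _ _ => 1)).
  apply: (@leq_trans (\sum_(g | list_extension s g) t)).
    rewrite sum_nat_const mulnC; apply/eq_leq; congr (_ * _).
    by apply: eq_card => g; rewrite inE.
  by apply: leq_sum => g gs; rewrite sum1_card; apply: free_t.
have recolor_inj : {in P &, injective (fun p => recolor p.1 x p.2)}.
  move=> [g a] [g' a']; rewrite !inE /= => /andP[/and3P[/forallP g_off _ _] _].
  move=> /andP[/and3P[/forallP g'_off _ _] _] eq_rec.
  have := congr1 (fun f : {ffun W -> _} => f x) eq_rec; rewrite !ffunE eqxx => ea; subst a'.
  congr (_, _); apply/ffunP=> z.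
  have := congr1 (fun f : {ffun W -> _} => f z) eq_rec; rewrite !ffunE; case: eqP => [-> _|//].
  by rewrite (eqP (implyP (g_off x) xs)) (eqP (implyP (g'_off x) xs)).
apply: leq_trans card_P _; rewrite -(card_in_imset recolor_inj).
apply/subset_leq_card/subsetP=> f /imsetP[[g a]].
rewrite [_ \in P]inE => /andP[gs afree] ->.
by rewrite inE; apply: list_extension_rcons xs gs afree.
Qed.

Lemma list_extension_card t s : uniq s -> {subset s <= [predC K]} ->
  (forall x, x \in s -> count (e x) (take (index x s) s ++ K) + t <= #|A x|) ->
  t ^ size s <= #|[set g | list_extension s g]|.
Proof.
elim/last_ind: s => [|s x IHs].
  move=> _ _ _; rewrite expn0 card_gt0; apply/set0Pn; exists g0; rewrite inE.
  apply/and3P; split; [by apply/forallP=> x; rewrite eqxx implybT | by apply/forall_inP |].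
  by apply/forall_inP=> x xK; apply/forall_inP=> y yK; apply: g0_coloring.
rewrite rcons_uniq => /andP[xs s_uniq] sK s_deg.
have in_rcons y : y \in s -> y \in rcons s x by rewrite mem_rcons in_cons orbC => ->.
have take_s : take (index x (rcons s x)) (rcons s x) = s.
  by rewrite -cats1 index_cat (negbTE xs) /= eqxx addn0 take_size_cat.
have xK : x \notin K by apply: sK; rewrite mem_rcons mem_head.
rewrite size_rcons expnS; apply: leq_trans _ (list_extension_rcons_card (t := t) xs _).
  apply: leq_mul => //; apply: IHs => // [y /in_rcons/sK //|y ys].
  have := s_deg y (in_rcons y ys).
  by rewrite -cats1 index_cat ys takel_cat // index_size.
move=> g _; apply: leq_trans _ (free_colors_card g _); last by rewrite mem_cat negb_or xs.
by have := s_deg x; rewrite mem_rcons mem_head take_s => /(_ isT); lia.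
Qed.

Lemma list_colorings_card c t : col_ordering_ok e c -> uniq K ->
  (forall x, x \notin K -> t + size K + c <= #|A x|.+1) ->
  t ^ (#|W| - size K) <=
  #|[set g | dp_coloring h g && [forall x, if x \in K then g x == g0 x else g x \in A x]]|.
Proof.
case=> s0 [s0_enum s0_deg] K_uniq A_big; pose s := [seq x <- s0 | x \notin K].
have s0_uniq : uniq s0 by rewrite (perm_uniq s0_enum) enum_uniq.
have in_s0 x : x \in s0 by rewrite (perm_mem s0_enum) mem_enum.
have in_sK x : x \in s ++ K by rewrite mem_cat mem_filter in_s0 andbT orNb.
have deg_s x : x \in s -> count (e x) (take (index x s) s) < c.
  rewrite mem_filter => /andP[xK _]; rewrite take_index_filter // count_filter.
  by apply: leq_ltn_trans (s0_deg x (in_s0 x)); apply: sub_count => y /andP[].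
have <- : size s = #|W| - size K.
  by rewrite size_filter_notin // ?(perm_size s0_enum) ?cardE // => x _; apply: in_s0.
apply: leq_trans (list_extension_card _ _ _) _.
- exact: filter_uniq.
- by move=> x; rewrite mem_filter => /andP[].
- move=> x xs; have := deg_s x xs; have := count_size (e x) K.
  by move: xs; rewrite mem_filter => /andP[/A_big]; rewrite count_cat; lia.
apply/subset_leq_card/subsetP=> g; rewrite !inE.
case/and3P=> /forallP g_off /forall_inP g_A /forall_inP g_col; apply/andP; split.
  by apply/forallP=> x; apply/forallP=> y; apply: (forall_inP (g_col x (in_sK x))).
apply/forallP=> x; case: ifP => xK; last by apply: g_A; rewrite mem_filter xK in_s0.
by apply: (implyP (g_off x)); rewrite mem_filter xK.
Qed.

End GreedyExtension.
End DPCover.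

Definition full_cover (W : finType) (e : rel W) k (h : rel (W * 'I_k)) : bool :=
  [forall u, forall v, e u v ==> [forall a, [exists b, h (u, a) (v, b)]]].

Definition add_edge (T : eqType) (h : rel T) (p q : T) : rel T :=
  fun p' q' => h p' q' || [|| (p' == p) && (q' == q) | (p' == q) && (q' == p)].

Section UnmatchedColor.
Variables (W : finType) (e : rel W) (k : nat) (h : rel (W * 'I_k)).
Hypotheses (e_simple : simple_graph e) (h_cover : is_DP_cover e h).
Variables (u v : W) (x : 'I_k).
Hypotheses (euv : e u v) (x_unmatched : forall b, ~~ h (u, x) (v, b)).

Lemma unmatched_partner : exists y, forall a, ~~ h (v, y) (u, a).
Proof.
case: e_simple h_cover => e_sym _ [h_sym _ _ _ h_match].
pose E := [set p : 'I_k * 'I_k | h (u, p.1) (v, p.2)].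
have fst_inj : {in E &, injective (@fst 'I_k 'I_k)}.
  move=> [a b] [a' b']; rewrite !inE /= => hab hab' eaa; subst a'.
  by congr (_, _); apply: (DP_cover_matchingr h_cover euv hab hab').
have snd_inj : {in E &, injective (@snd 'I_k 'I_k)}.
  move=> [a b] [a' b']; rewrite !inE /= => hab hab' ebb; subst b'.
  by congr (_, _); apply: (DP_cover_matchingl e_sym h_cover euv hab hab').
have : #|(@fst 'I_k 'I_k) @: E| < #|[set: 'I_k]|.
  apply: proper_card; rewrite properT; apply/negP=> /eqP fstT.
  have : x \in (@fst 'I_k 'I_k) @: E by rewrite fstT inE.
  by case/imsetP=> -[a b]; rewrite inE /= => hab xa; move: (x_unmatched b); rewrite xa hab.
rewrite cardsT card_ord (card_in_imset fst_inj) -(card_in_imset snd_inj) => lt_k.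
have [y yE] : exists y, y \notin (@snd 'I_k 'I_k) @: E.
  apply/existsP; rewrite -negb_forall; apply: contraL lt_k => /forallP all_snd.
  rewrite -leqNgt -[X in X <= _]card_ord -cardsT; apply/subset_leq_card/subsetP=> y _.
  exact: all_snd.
exists y => a; apply: contra yE => hya; apply/imsetP; exists (a, y) => //.
by rewrite inE /= h_sym.
Qed.

Lemma add_edge_DP_cover y : (forall a, ~~ h (v, y) (u, a)) ->
  is_DP_cover e (add_edge h (u, x) (v, y)).
Proof.
case: e_simple h_cover => e_sym e_irr [h_sym h_irr h_clique h_edge h_match] y_unmatched.
have uv : u != v by apply: contraTneq euv => ->; rewrite e_irr.
have uxvy : (u, x) != (v, y) by rewrite xpair_eqE negb_and uv.
pose added (p q : W * 'I_k) := [|| (p == (u, x)) && (q == (v, y)) | (p == (v, y)) && (q == (u, x))].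
have added_unmatched w i w' j : added (w, i) (w', j) -> forall j', ~~ h (w, i) (w', j').
  by case/orP=> /andP[/eqP[-> ->] /eqP[-> _]] j'; [apply: x_unmatched | apply: y_unmatched].
have added_color w i w' j : added (w, i) (w', j) -> j = if w' == v then y else x.
  by case/orP=> /andP[_ /eqP[-> ->]]; rewrite ?eqxx ?(negPf uv).
split.
- move=> p q; rewrite /add_edge h_sym; congr (_ || _).
  by rewrite orbC; congr (_ || _); apply: andbC.
- by move=> p; rewrite /add_edge h_irr /=; case: eqP => [->|_]; rewrite ?(negPf uxvy) ?andbF.
- by move=> w i j ij; rewrite /add_edge h_clique.
- move=> w w' i j ww'; case/orP=> [/(h_edge _ _ _ _ ww') //|].
  by case/orP=> /andP[/eqP[-> _] /eqP[-> _]] //; rewrite e_sym.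
move=> w w' i ew; apply/card_le1_eqP=> j' j; rewrite !inE /add_edge.
case/orP=> [hj'|aj']; case/orP=> [hj|aj].
- exact: (DP_cover_matchingr h_cover ew hj hj').
- by rewrite (negPf (added_unmatched _ _ _ _ aj j')) in hj'.
- by rewrite (negPf (added_unmatched _ _ _ _ aj' j)) in hj.
- by rewrite (added_color _ _ _ _ aj) (added_color _ _ _ _ aj').
Qed.

Lemma DP_colorings_card_unmatched c pG : col_ordering_ok e c -> c < k ->
  (forall h' : rel (W * 'I_k), is_DP_cover e h' -> pG <= DP_count h') ->
  pG + (k - c - 1) ^ (#|W| - 2) <= #|[set f | dp_coloring h f]|.
Proof.
move=> col_c ck pG_min.
case: e_simple (h_cover) => e_sym e_irr [_ h_irr _ _ _].
have uv : u != v by apply: contraTneq euv => ->; rewrite e_irr.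
have [y y_unmatched] := unmatched_partner.
pose h' := add_edge h (u, x) (v, y).
have h'_card : pG <= #|[set f | dp_coloring h' f]|.
  have h'_cover := add_edge_DP_cover y_unmatched.
  by rewrite -DP_countE; [apply: pG_min | case: h'_cover].
pose g0 : {ffun W -> 'I_k} := [ffun z => if z == u then x else y].
have g0u : g0 u = x by rewrite ffunE eqxx.
have g0v : g0 v = y by rewrite ffunE eq_sym (negPf uv).
pose T := [set g | dp_coloring h g &&
  [forall z, if z \in [:: u; v] then g z == g0 z else g z \in [set: 'I_k]]].
have T_card : (k - c - 1) ^ (#|W| - 2) <= #|T|.
  apply: (list_colorings_card (A := fun=> [set: 'I_k]) e_sym h_cover _ col_c).
  - move=> z z'; rewrite !inE => /orP[] /eqP-> /orP[] /eqP->;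
      by rewrite ?h_irr ?g0u ?g0v.
  - by rewrite /= inE uv.
  - by move=> z _; rewrite cardsT card_ord /=; lia.
have disjoint : [set f | dp_coloring h' f] :&: T = set0.
  apply/setP=> f; rewrite !inE; apply/negP=> /andP[/forallP f_col /andP[_ /forallP f_uv]].
  move: (f_uv u) (f_uv v); rewrite !inE !eqxx orbT g0u g0v => /eqP fu /eqP fv.
  by move: (forallP (f_col u) v); rewrite fu fv /h' /add_edge !eqxx orbT.
have sub : [set f | dp_coloring h' f] :|: T \subset [set f | dp_coloring h f].
  apply/subsetP=> f; rewrite !inE => /orP[/forallP f_col | /andP[] //].
  apply/forallP=> p; apply/forallP=> q.
  by move: (forallP (f_col p) q); rewrite /h' /add_edge negb_or => /andP[].
apply: leq_trans (subset_leq_card sub).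
by rewrite cardsU disjoint cards0 subn0 leq_add.
Qed.

End UnmatchedColor.

Lemma DP_colorings_card_not_full (W : finType) (e : rel W) k (h : rel (W * 'I_k)) c pG :
  simple_graph e -> is_DP_cover e h -> col_ordering_ok e c -> c < k ->
  (forall h' : rel (W * 'I_k), is_DP_cover e h' -> pG <= DP_count h') -> ~~ full_cover e h ->
  pG + (k - c - 1) ^ (#|W| - 2) <= #|[set f | dp_coloring h f]|.
Proof.
move=> e_simple h_cover col_c ck pG_min /forallPn[u /forallPn[v]].
rewrite negb_imply => /andP[euv /forallPn[x]]; rewrite negb_exists => /forallP x_unmatched.
by apply: (DP_colorings_card_unmatched e_simple h_cover euv x_unmatched col_c ck pG_min).
Qed.

Lemma join_K1_sym (V : finType) (e : rel V) : symmetric e -> symmetric (join_K1 e).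
Proof. by move=> e_sym [x|] [y|] //=; rewrite e_sym. Qed.

Section JoinCover.
Variables (V : finType) (e : rel V) (m : nat) (H : rel (option V * 'I_m)).
Hypothesis H_cover : is_DP_cover (join_K1 e) H.

Definition base_cover : rel (V * 'I_m) := fun p q => H (Some p.1, p.2) (Some q.1, q.2).

Lemma base_cover_DP_cover : is_DP_cover e base_cover.
Proof.
case: H_cover => H_sym H_irr H_clique H_edge H_match; split.
- by move=> p q; rewrite /base_cover H_sym.
- by move=> p; rewrite /base_cover H_irr.
- by move=> u i j ij; rewrite /base_cover H_clique.
- move=> u v a b uv; rewrite /base_cover /= => /H_edge; apply.
  by rewrite (inj_eq Some_inj).
- move=> u v a euv; apply: leq_trans (H_match (Some u) (Some v) a euv).
  by apply/eq_leq/eq_card => b; rewrite !inE.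
Qed.

Definition apex_colorings (i : 'I_m) := [set g : {ffun V -> 'I_m} |
  dp_coloring base_cover g && [forall u, ~~ H (None, i) (Some u, g u)]].

Lemma sum_apex_colorings_card :
  \sum_i #|apex_colorings i| <= #|[set f | dp_coloring H f]|.
Proof.
case: H_cover => H_sym H_irr _ _ _.
rewrite -sum1_card (partition_big (fun f : {ffun option V -> 'I_m} => f None) predT) //=.
apply: leq_sum => i _.
pose ext (g : {ffun V -> 'I_m}) := [ffun x => if x is Some u then g u else i].
have ext_inj : injective ext.
  move=> g1 g2 eq_ext; apply/ffunP=> u.
  by have := congr1 (fun f : {ffun option V -> 'I_m} => f (Some u)) eq_ext; rewrite !ffunE.
rewrite (eq_bigl (mem [set f | dp_coloring H f & f None == i])); last by move=> f; rewrite !inE.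
rewrite sum1_card -(card_imset _ ext_inj); apply/subset_leq_card/subsetP=> f /imsetP[g].
rewrite !inE => /andP[/forallP g_col /forallP g_apex] ->.
rewrite ffunE eqxx andbT; apply/forallP=> -[x|]; apply/forallP=> -[y|]; rewrite !ffunE.
- exact: (forallP (g_col x)).
- by rewrite H_sym.
- exact: g_apex.
- by rewrite H_irr.
Qed.

End JoinCover.

Section ApexMatching.
Variables (V : finType) (e : rel V) (k : nat) (H : rel (option V * 'I_k.+1)).
Hypotheses (e_simple : simple_graph e) (H_cover : is_DP_cover (join_K1 e) H).

Lemma apex_matching_uniq i u a b : H (None, i) (Some u, a) -> H (None, i) (Some u, b) -> a = b.
Proof. exact: (DP_cover_matchingr H_cover (isT : join_K1 e None (Some u))). Qed.

(* [ord0] is a junk value, used only when (None, i) has no neighbour in L(u). *)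
Definition apex_match (i : 'I_k.+1) (u : V) : 'I_k.+1 :=
  odflt ord0 [pick j | H (None, i) (Some u, j)].

Lemma apex_matchP i u a : H (None, i) (Some u, a) -> a = apex_match i u.
Proof.
rewrite /apex_match; case: pickP => [j Hj|none] Ha /=; first exact: apex_matching_uniq Ha Hj.
by move: (none a); rewrite Ha.
Qed.

(* [lift (apex_match i u)] identifies 'I_k with L(u) minus the matched color. *)
Definition reduced_cover (i : 'I_k.+1) : rel (V * 'I_k) :=
  fun p q => base_cover H (p.1, lift (apex_match i p.1) p.2) (q.1, lift (apex_match i q.1) q.2).

Lemma reduced_cover_DP_cover i : is_DP_cover e (reduced_cover i).
Proof.
case: (base_cover_DP_cover H_cover) => G_sym G_irr G_clique G_edge G_match; split.
- by move=> p q; rewrite /reduced_cover G_sym.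
- by move=> p; rewrite /reduced_cover G_irr.
- by move=> u a b ab; rewrite /reduced_cover G_clique // (inj_eq lift_inj).
- by move=> u v a b uv /G_edge; apply.
- move=> u v a euv; apply: leq_trans (G_match u v (lift (apex_match i u) a) euv).
  rewrite -(card_imset _ (@lift_inj _ (apex_match i v))).
  by apply/subset_leq_card/subsetP=> b' /imsetP[b]; rewrite !inE => hb ->.
Qed.

Definition avoid_match_colorings i := [set g : {ffun V -> 'I_k.+1} |
  dp_coloring (base_cover H) g && [forall u, g u != apex_match i u]].

Lemma avoid_match_colorings_sub i : avoid_match_colorings i \subset apex_colorings H i.
Proof.
apply/subsetP=> g; rewrite !inE => /andP[-> /forallP g_avoid] /=.
by apply/forallP=> u; apply: contra (g_avoid u) => /apex_matchP <-.
Qed.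

Lemma reduced_colorings_card i :
  #|[set g | dp_coloring (reduced_cover i) g]| <= #|avoid_match_colorings i|.
Proof.
pose F (g : {ffun V -> 'I_k}) := [ffun u => lift (apex_match i u) (g u)].
have F_inj : injective F.
  move=> g1 g2 eqF; apply/ffunP=> u; apply: (@lift_inj _ (apex_match i u)).
  by have := congr1 (fun f : {ffun V -> 'I_k.+1} => f u) eqF; rewrite !ffunE.
rewrite -(card_imset _ F_inj); apply/subset_leq_card/subsetP=> f /imsetP[g].
rewrite !inE => /forallP g_col ->; apply/andP; split.
  by apply/forallP=> x; apply/forallP=> y; rewrite !ffunE; apply: (forallP (g_col x)).
by apply/forallP=> u; rewrite ffunE eq_sym neq_lift.
Qed.

Lemma reduced_full_match i u v a : full_cover e (reduced_cover i) -> e u v ->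
  a != apex_match i u -> exists2 b, b != apex_match i v & H (Some u, a) (Some v, b).
Proof.
move=> /forallP/(_ u)/forallP/(_ v)/implyP/(_ _)/forallP full euv.
case: (unliftP (apex_match i u) a) => [a' ->|->]; last by rewrite eqxx.
move=> _; have /existsP[b' hb'] := full euv a'.
by exists (lift (apex_match i v) b'); [rewrite eq_sym neq_lift | exact: hb'].
Qed.

Variables (c pG : nat).
Hypotheses (col_c : col_ordering_ok e c) (ck : c < k)
  (pG_min : forall h : rel (V * 'I_k), is_DP_cover e h -> pG <= DP_count h).

Lemma avoid_match_colorings_card i : pG <= #|avoid_match_colorings i|.
Proof.
apply: leq_trans (reduced_colorings_card i); have := reduced_cover_DP_cover i.
by move=> h_cover; rewrite -DP_countE; [apply: pG_min | case: h_cover].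
Qed.

Lemma apex_colorings_card i : pG <= #|apex_colorings H i|.
Proof.
exact: leq_trans (avoid_match_colorings_card i) (subset_leq_card (avoid_match_colorings_sub i)).
Qed.

Lemma apex_colorings_card_unmatched i u : (forall j, ~~ H (None, i) (Some u, j)) ->
  pG + (k - c) ^ (#|V| - 1) <= #|apex_colorings H i|.
Proof.
move=> u_unmatched; case: e_simple => e_sym _.
have G_cover := base_cover_DP_cover H_cover.
pose g0 : {ffun V -> 'I_k.+1} := [ffun=> apex_match i u].
pose A z := [set a | ~~ H (None, i) (Some z, a)].
pose T := [set g | dp_coloring (base_cover H) g &&
  [forall z, if z \in [:: u] then g z == g0 z else g z \in A z]].
have T_card : (k - c) ^ (#|V| - 1) <= #|T|.
  apply: (list_colorings_card e_sym G_cover _ col_c) => // [z z'|z _].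
    by rewrite !inE => /eqP-> /eqP->; case: G_cover => _ G_irr _ _ _; rewrite G_irr.
  set S := [set a | H (None, i) (Some z, a)].
  have -> : A z = ~: S by apply/setP=> a; rewrite !inE.
  have S_le1 : #|S| <= 1 by case: H_cover => _ _ _ _ H_match; apply: H_match.
  by rewrite cardsCs setCK card_ord /=; move: #|S| S_le1 ck => n; lia.
have disjoint : avoid_match_colorings i :&: T = set0.
  apply/setP=> g; rewrite !inE; apply/negP.
  case/andP=> /andP[_ /forallP g_avoid] /andP[_ /forallP g_u].
  by move: (g_avoid u) (g_u u); rewrite mem_seq1 eqxx ffunE => /negPf->.
have sub : avoid_match_colorings i :|: T \subset apex_colorings H i.
  rewrite subUset avoid_match_colorings_sub; apply/subsetP=> g; rewrite !inE.
  case/andP=> -> /forallP g_A; apply/forallP=> z; move: (g_A z); rewrite mem_seq1.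
  by case: eqP => [-> /eqP-> | _]; rewrite ?ffunE ?inE.
apply: leq_trans (subset_leq_card sub).
by rewrite cardsU disjoint cards0 subn0 leq_add // avoid_match_colorings_card.
Qed.

Lemma apex_colorings_card_not_full i : ~~ full_cover e (reduced_cover i) ->
  pG + (k - c - 1) ^ (#|V| - 2) <= #|apex_colorings H i|.
Proof.
move=> not_full; apply: leq_trans (subset_leq_card (avoid_match_colorings_sub i)).
apply: leq_trans (reduced_colorings_card i).
exact: DP_colorings_card_not_full (reduced_cover_DP_cover i) col_c ck pG_min not_full.
Qed.

End ApexMatching.

Section FullApexMatchings.
Variables (V : finType) (e : rel V) (k : nat) (H : rel (option V * 'I_k.+1)).
Hypotheses (e_simple : simple_graph e) (H_cover : is_DP_cover (join_K1 e) H).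
Hypothesis apex_total : forall i u, exists j, H (None, i) (Some u, j).

Lemma apex_match_edge i u : H (None, i) (Some u, apex_match H i u).
Proof. by have [j Hj] := apex_total i u; rewrite -(apex_matchP H_cover Hj). Qed.

Lemma apex_match_inj u : injective (apex_match H ^~ u).
Proof.
case: e_simple => e_sym _; move=> i j /= eq_ij.
apply: (DP_cover_matchingl (join_K1_sym e_sym) H_cover (isT : join_K1 e None (Some u))).
  exact: apex_match_edge.
by rewrite eq_ij; apply: apex_match_edge.
Qed.

Lemma apex_match_onto u b : exists i, b = apex_match H i u.
Proof.
by have /codomP[i ->] := inj_card_onto (@apex_match_inj u) (leqnn _) b; exists i.
Qed.

Hypotheses (k_gt1 : 1 < k)
  (full_pair : forall i j, i != j ->
     full_cover e (reduced_cover H i) || full_cover e (reduced_cover H j)).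

Lemma apex_match_adjacent l u v : e u v ->
  H (Some u, apex_match H l u) (Some v, apex_match H l v).
Proof.
case: e_simple => e_sym _; move=> euv.
have evu : e v u by rewrite e_sym.
have match_neq i j w : i != j -> apex_match H i w != apex_match H j w.
  by rewrite (inj_eq (@apex_match_inj w)).
have [l' l'l full_l'] : exists2 l', l' != l & full_cover e (reduced_cover H l').
  have : 1 < #|predC1 l| by rewrite cardC1 card_ord.
  case/card_gt1P=> i [j [il jl ij]].
  by case/orP: (full_pair ij) => ?; [exists i | exists j].
rewrite eq_sym in l'l; have [b _ hb] := reduced_full_match full_l' euv (match_neq _ _ u l'l).
have [y def_b] := apex_match_onto v b; rewrite {b}def_b in hb.
case: (eqVneq y l) hb => [-> //|yl hb].
case/orP: (full_pair yl) => [full_y | full_l].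
- rewrite eq_sym in yl.
  have [b' b'y hb'] := reduced_full_match full_y euv (match_neq _ _ u yl).
  by rewrite (DP_cover_matchingr H_cover (euv : join_K1 e (Some u) (Some v)) hb hb') eqxx in b'y.
- have [a' a'l ha'] := reduced_full_match full_l evu (match_neq _ _ v yl).
  case: H_cover => H_sym _ _ _ _; rewrite H_sym in hb.
  by rewrite (DP_cover_matchingr H_cover (evu : join_K1 e (Some v) (Some u)) hb ha') eqxx in a'l.
Qed.

Lemma chrom_poly_le_DP_colorings :
  chrom_poly (join_K1 e) k.+1 <= #|[set f | dp_coloring H f]|.
Proof.
case: e_simple (H_cover) => e_sym _ [H_sym H_irr _ H_edge _].
pose F (f : {ffun option V -> 'I_k.+1}) :=
  [ffun x => if x is Some u then apex_match H (f x) u else f None].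
have F_inj : injective F.
  move=> f1 f2 eqF; apply/ffunP=> x.
  have := congr1 (fun f : {ffun option V -> 'I_k.+1} => f x) eqF.
  by case: x => [u|]; rewrite !ffunE //; apply: apex_match_inj.
rewrite /chrom_poly -(card_imset _ F_inj); apply/subset_leq_card/subsetP=> g /imsetP[f].
rewrite !inE => /forallP f_proper ->.
have f_neq x y : join_K1 e x y -> f x != f y by apply: (implyP (forallP (f_proper x) y)).
have apex_free x : ~~ H (None, f None) (Some x, apex_match H (f (Some x)) x).
  apply/negP=> Hx; move: (f_neq None (Some x) isT).
  rewrite (DP_cover_matchingl (join_K1_sym e_sym) H_cover (isT : join_K1 e None (Some x)) Hx
    (apex_match_edge _ _)).
  by rewrite eqxx.
apply/forallP=> -[x|]; apply/forallP=> -[y|]; rewrite !ffunE ?H_irr ?apex_free //; last first.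
  by rewrite H_sym apex_free.
apply/negP=> Hxy; have [xy|xy] := eqVneq x y; first by rewrite xy H_irr in Hxy.
have exy : e x y by apply: (H_edge (Some x) (Some y) _ _ _ Hxy); rewrite (inj_eq Some_inj).
have := DP_cover_matchingr H_cover (exy : join_K1 e (Some x) (Some y)) Hxy
  (apex_match_adjacent (f (Some x)) exy).
by move/apex_match_inj => f_eq; move: (f_neq (Some x) (Some y) exy); rewrite f_eq eqxx.
Qed.

End FullApexMatchings.

Lemma leq_expn2r a b n : a <= b -> a ^ n <= b ^ n.
Proof. by move=> ab; elim: n => [|n IHn] //; rewrite !expnS leq_mul. Qed.

Lemma sum_excess_ge m (F : 'I_m -> nat) b (s : seq 'I_m) : uniq s ->
  (forall l, b <= F l) -> m * b + \sum_(l <- s) (F l - b) <= \sum_l F l.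
Proof.
move=> s_uniq Fb.
have -> : \sum_l F l = \sum_l (b + (F l - b)) by apply: eq_bigr => l _; rewrite subnKC.
rewrite big_split /= sum_nat_const card_ord leq_add2l.
apply: (uniq_sub_le_big leqnn (fun x y => leq_addr y x)) => // [|l _].
  exact: index_enum_uniq.
exact: mem_index_enum.
Qed.

Lemma col_ordering_ok_card (V : finType) (e : rel V) : col_ordering_ok e #|V|.
Proof.
exists (enum V); split => // x xV; apply: leq_ltn_trans (count_size _ _) _.
by rewrite size_takel ?index_size // cardE index_mem.
Qed.

Section JoinLowerBound.
Variables (V : finType) (e : rel V) (k c pG : nat) (H : rel (option V * 'I_k.+1)).
Hypotheses (e_simple : simple_graph e) (H_cover : is_DP_cover (join_K1 e) H)
  (col_c : col_ordering_ok e c) (ck : c.+1 < k) (V_gt1 : 1 < #|V|)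
  (pG_min : forall h : rel (V * 'I_k), is_DP_cover e h -> pG <= DP_count h).

Lemma join_colorings_card_unmatched i u : (forall j, ~~ H (None, i) (Some u, j)) ->
  k.+1 * pG + 2 * (k - c - 1) ^ (#|V| - 2) <= #|[set f | dp_coloring H f]|.
Proof.
move=> u_unmatched; have ck' : c < k by apply: ltnW.
have apex_ge := apex_colorings_card H_cover pG_min.
apply: leq_trans (sum_apex_colorings_card H_cover).
apply: leq_trans (sum_excess_ge (s := [:: i]) isT apex_ge).
rewrite big_seq1 leq_add2l leq_subRL ?apex_ge //.
apply: leq_trans (apex_colorings_card_unmatched e_simple H_cover col_c ck' pG_min u_unmatched).
rewrite leq_add2l -(subnSK V_gt1) expnS.
by apply: leq_mul; [lia | apply: leq_expn2r; lia].
Qed.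

Lemma join_colorings_card_not_full i j : i != j ->
  ~~ full_cover e (reduced_cover H i) -> ~~ full_cover e (reduced_cover H j) ->
  k.+1 * pG + 2 * (k - c - 1) ^ (#|V| - 2) <= #|[set f | dp_coloring H f]|.
Proof.
move=> ij not_full_i not_full_j; have ck' : c < k by apply: ltnW.
have apex_ge := apex_colorings_card H_cover pG_min.
have excess l : ~~ full_cover e (reduced_cover H l) ->
    (k - c - 1) ^ (#|V| - 2) <= #|apex_colorings H l| - pG.
  move=> not_full; rewrite leq_subRL ?apex_ge //.
  exact: (apex_colorings_card_not_full e_simple H_cover col_c ck' pG_min not_full).
apply: leq_trans (sum_apex_colorings_card H_cover).
have ij_uniq : uniq [:: i; j] by rewrite /= inE ij.
apply: leq_trans (sum_excess_ge ij_uniq apex_ge).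
by rewrite !big_cons big_nil addn0 leq_add2l mul2n -addnn leq_add ?excess.
Qed.

Lemma join_colorings_card :
  minn (chrom_poly (join_K1 e) k.+1) (k.+1 * pG + 2 * (k - c - 1) ^ (#|V| - 2))
    <= #|[set f | dp_coloring H f]|.
Proof.
case: (boolP [exists i, exists u, [forall j, ~~ H (None, i) (Some u, j)]]).
  case/existsP=> i /existsP[u /forallP u_unmatched].
  exact: leq_trans (geq_minr _ _) (join_colorings_card_unmatched u_unmatched).
move=> /existsPn all_matched.
have apex_total i u : exists j, H (None, i) (Some u, j).
  by have /existsPn/(_ u)/forallPn[j] := all_matched i; rewrite negbK; exists j.
case: (boolP [exists i, exists j, [&& i != j, ~~ full_cover e (reduced_cover H i)
                                    & ~~ full_cover e (reduced_cover H j)]]).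
  case/existsP=> i /existsP[j /and3P[ij not_full_i not_full_j]].
  exact: leq_trans (geq_minr _ _) (join_colorings_card_not_full ij not_full_i not_full_j).
move=> /existsPn no_two; apply: leq_trans (geq_minl _ _) _.
apply: (chrom_poly_le_DP_colorings e_simple H_cover apex_total) => [|i j ij]; first by lia.
by have /existsPn/(_ j) := no_two i; rewrite ij /= negb_and !negbK.
Qed.

End JoinLowerBound.

Theorem mainTheorem6 (V : finType) (e : rel V) (c m pJ pG : nat) :
  simple_graph e -> connected_graph e ->
  is_coloring_number e c -> 3 <= c ->
  c + 3 <= m ->
  is_DP_poly (join_K1 e) m pJ ->
  is_DP_poly e (m - 1) pG ->
  minn (chrom_poly (join_K1 e) m)
       (m * pG + 2 * (m - c - 2) ^ (#|V| - 2)) <= pJ.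
Proof.
move=> e_simple _ [col_c c_min] c_ge3 cm [[H [H_cover <-]] _] [_ pG_min].
have [k def_m] : exists k, m = k.+1 by exists m.-1; lia.
subst m; rewrite subSS subn0 in pG_min.
have c_le_V := c_min _ (col_ordering_ok_card e).
have -> : k.+1 - c - 2 = k - c - 1 by lia.
rewrite DP_countE; last by case: H_cover.
by apply: join_colorings_card => //; lia.
Qed.
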